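(* Let $a,b\in\mathbb{N}$ with $a,b>1$, $c\in\mathbb{R}$ with $c>0$, and $h:\mathbb{N}\to(0,\infty]$ with $0<h(n)<\infty$ for all $n\in\mathbb{N}$. Consider the recurrence $$T(1)=c,\qquad T(n)=aT(n/b)+h(n)\ \text{ for } n\in\omega_b.$$ Then this recurrence has a unique solution $f_T\in\mathcal{RT}_{b,c}$. Moreover, if there exists $g\in\mathcal{RT}_{b,c}$ such that $\Phi_T$ is an improver with respect to $g$, then $f_T\in\mathcal{O}(g)$.
   Context: $\mathbb{N}$ is the set of positive integers, $\omega$ the nonnegative integers, $\omega_b=\{b^k:k\in\mathbb{N}\}$. $\mathcal{RT}$ is the set of all functions $\mathbb{N}\to(0,\infty]$, and $\mathcal{RT}_{b,c}=\{f\in\mathcal{RT}: f(1)=c \text{ and } f(n)=\infty \text{ for all } n\notin\omega_b \text{ with } n>1\}$. $\Phi_T:\mathcal{RT}_{b,c}\to\mathcal{RT}_{b,c}$ is defined by $\Phi_T(f)(1)=c$, $\Phi_T(f)(n)=\infty$ if $n\notin\omega_b$ and $n>1$, and $\Phi_T(f)(n)=af(n/b)+h(n)$ otherwise. A functional $\Phi:C\to C$ ($C\subseteq\mathcal{RT}$) is an improver with respect to $f\in C$ if $\Phi^{n+1}(f)\le\Phi^n(f)$ pointwise for all $n\in\omega$ (with $\Phi^0(f)=f$). For $f,g\in\mathcal{RT}$, $f\in\mathcal{O}(g)$ means there exist $n_0\in\mathbb{N}$ and $C\ge0$ with $f(n)\le Cg(n)$ for all $n\ge n_0$. *)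

From HB Require Import structures.
From mathcomp Require Import all_boot all_order all_algebra.
From mathcomp Require Import boolp classical_sets reals constructive_ereal ereal.
Set Implicit Arguments. Unset Strict Implicit. Unset Printing Implicit Defensive.
Import Order.TTheory GRing.Theory Num.Theory.
Local Open Scope ring_scope.
Local Open Scope ereal_scope.

(* Functions N -> (0,oo] are functions nat -> \bar R; only positive
   arguments n >= 1 are meaningful (the value at 0 is ignored). *)

Definition in_omega (b n : nat) : Prop := exists k : nat, (0 < k)%N /\ n = (b ^ k)%N.

Definition inRT {R : realType} (f : nat -> \bar R) : Prop :=
  forall n : nat, (0 < n)%N -> 0 < f n.

Definition inRTbc {R : realType} (b : nat) (c : R) (f : nat -> \bar R) : Prop :=
  inRT f /\ f 1%N = c%:E /\
  (forall n : nat, (1 < n)%N -> ~ in_omega b n -> f n = +oo).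

Definition solves_rec {R : realType} (a b : nat) (c : R) (h : nat -> \bar R)
    (f : nat -> \bar R) : Prop :=
  inRTbc b c f /\
  (forall n : nat, in_omega b n -> f n = (a%:R)%:E * f (n %/ b)%N + h n).

Definition PhiT {R : realType} (a b : nat) (c : R) (h : nat -> \bar R)
    (f : nat -> \bar R) : nat -> \bar R :=
  fun n => if n == 1%N then c%:E
           else if `[< in_omega b n >] then (a%:R)%:E * f (n %/ b)%N + h n
           else +oo.

Definition improver {R : realType} (Phi : (nat -> \bar R) -> (nat -> \bar R))
    (g : nat -> \bar R) : Prop :=
  forall (k n : nat), (0 < n)%N -> iter k.+1 Phi g n <= iter k Phi g n.

Definition bigO {R : realType} (f g : nat -> \bar R) : Prop :=
  exists (n0 : nat) (C : R), (0 < n0)%N /\ (0 <= C)%R /\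
    forall n : nat, (n0 <= n)%N -> f n <= C%:E * g n.

From HB Require Import structures.
From mathcomp Require Import all_boot all_order all_algebra.
From mathcomp Require Import boolp classical_sets reals constructive_ereal ereal.
Import Order.TTheory GRing.Theory Num.Theory.
Local Open Scope ring_scope.
Local Open Scope ereal_scope.

(* A function in RT_{b,c} is determined by its values on the powers b^j, and
   on these both any solution and any iterate Phi_T^k(g) with k >= j are forced
   to equal the unrolled recurrence u_0 = c, u_{j+1} = a u_j + h(b^{j+1}).
   Hence the solution is unique, and for an improver g the chain
   g >= Phi_T(g) >= Phi_T^2(g) >= ... gives f_T <= g pointwise, so f_T is in
   O(g) with constant 1. *)

Section PowerRecurrence.
Context {R : realType}.
Variables (a b : nat) (c : R) (h : nat -> \bar R).
Hypothesis b_gt1 : (1 < b)%N.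

Lemma expn_gt1 {k} : (0 < k)%N -> (1 < b ^ k)%N.
Proof. by move=> k_gt0; rewrite -{1}(expn0 b) ltn_exp2l. Qed.

Lemma expnSK k : ((b ^ k.+1) %/ b)%N = (b ^ k)%N.
Proof. by rewrite expnSr mulnK // ltnW. Qed.

Lemma in_omega_expS k : in_omega b (b ^ k.+1)%N.
Proof. by exists k.+1. Qed.

Lemma in_omegaP n : (0 < n)%N ->
  [\/ n = 1%N, exists k, n = (b ^ k.+1)%N | (1 < n)%N /\ ~ in_omega b n].
Proof.
move=> n_gt0; have [->|n_neq1] := eqVneq n 1%N; first exact: Or31.
have [[[|k] [k_gt0 ->]]|not_omega] := pselect (in_omega b n) => //.
  by apply: Or32; exists k.
by apply: Or33; split; rewrite // ltn_neqAle eq_sym n_neq1.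
Qed.

Fixpoint unrolled_rec (j : nat) : \bar R :=
  if j is j'.+1 then (a%:R)%:E * unrolled_rec j' + h (b ^ j'.+1)%N else c%:E.

Lemma unrolled_rec_gt0 j : (0 < c)%R ->
  (forall n, (0 < n)%N -> 0 < h n) -> 0 < unrolled_rec j.
Proof.
move=> c_gt0 h_gt0; elim: j => [|j IH] /=; first by rewrite lte_fin.
apply: lt_le_trans (h_gt0 _ (ltnW (expn_gt1 (ltn0Sn j)))) _.
by rewrite leeDr // mule_ge0 // ?lee_fin ?ler0n // ltW.
Qed.

Lemma PhiT_at1 f : PhiT a b c h f 1%N = c%:E.
Proof. by rewrite /PhiT eqxx. Qed.

Lemma PhiT_expS f k : PhiT a b c h f (b ^ k.+1)%N =
  (a%:R)%:E * f (b ^ k)%N + h (b ^ k.+1)%N.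
Proof.
rewrite /PhiT ifN_eq; last by rewrite gtn_eqF // expn_gt1.
by rewrite asboolT ?expnSK //; apply: in_omega_expS.
Qed.

Lemma PhiT_notin_omega f n :
  n != 1%N -> ~ in_omega b n -> PhiT a b c h f n = +oo.
Proof. by move=> n_neq1 not_omega; rewrite /PhiT ifN_eq // asboolF. Qed.

Lemma iter_PhiT_exp g {j k} : g 1%N = c%:E -> (j <= k)%N ->
  iter k (PhiT a b c h) g (b ^ j)%N = unrolled_rec j.
Proof.
move=> g1; elim: j k => [|j IH] [|k] //= le_jk.
by rewrite PhiT_expS IH.
Qed.

Lemma solves_rec_exp f k : solves_rec a b c h f -> f (b ^ k)%N = unrolled_rec k.
Proof.
move=> [[_ [f1 _]] f_rec]; elim: k => [|k IH]; first by rewrite expn0 f1.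
by rewrite f_rec ?expnSK ?IH //; apply: in_omega_expS.
Qed.

Lemma solves_rec_unique f f' : solves_rec a b c h f -> solves_rec a b c h f' ->
  forall n, (0 < n)%N -> f n = f' n.
Proof.
move=> f_sol f'_sol n /in_omegaP[->|[k ->]|[n_gt1 not_omega]].
- by case: f_sol => [[_ [-> _]] _]; case: f'_sol => [[_ [-> _]] _].
- by rewrite !solves_rec_exp.
- case: f_sol f'_sol => [[_ [_ f_out]] _] [[_ [_ f'_out]] _].
  by rewrite f_out // f'_out.
Qed.

Lemma improver_iter_le g k n : improver (PhiT a b c h) g -> (0 < n)%N ->
  iter k (PhiT a b c h) g n <= g n.
Proof.
move=> g_imp n_gt0; elim: k => [|k IH] //.
exact: le_trans (g_imp k n n_gt0) IH.
Qed.

Lemma solves_rec_le_improver f g : solves_rec a b c h f -> inRTbc b c g ->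
  improver (PhiT a b c h) g -> forall n, (0 < n)%N -> f n <= g n.
Proof.
move=> f_sol [_ [g1 g_out]] g_imp n /in_omegaP[->|[k ->]|[n_gt1 not_omega]].
- by case: f_sol => [[_ [-> _]] _]; rewrite g1.
- rewrite solves_rec_exp // -(iter_PhiT_exp g g1 (leqnn k.+1)).
  exact/improver_iter_le/ltnW/expn_gt1.
- by rewrite g_out // leey.
Qed.

(* Since j < b ^ j, the n-th iterate already has the final value at n. *)
Definition rec_solution (n : nat) : \bar R :=
  iter n (PhiT a b c h) (fun=> c%:E) n.

Lemma rec_solution_exp k : rec_solution (b ^ k)%N = unrolled_rec k.
Proof. by rewrite /rec_solution iter_PhiT_exp // ltnW // ltn_expl. Qed.

Lemma solves_rec_solution : (0 < c)%R ->
  (forall n, (0 < n)%N -> 0 < h n) -> solves_rec a b c h rec_solution.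
Proof.
move=> c_gt0 h_gt0.
have sol1 : rec_solution 1%N = c%:E by rewrite /rec_solution /= PhiT_at1.
have sol_out n : (1 < n)%N -> ~ in_omega b n -> rec_solution n = +oo.
  by case: n => // n n_gt1 not_omega; rewrite /rec_solution iterS
    PhiT_notin_omega // gtn_eqF.
split; [split; [|split] |] => //.
- move=> n /in_omegaP[->|[k ->]|[n_gt1 not_omega]].
  + by rewrite sol1 lte_fin.
  + by rewrite rec_solution_exp unrolled_rec_gt0.
  + by rewrite sol_out.
- by move=> n [[|k] [// _ ->]]; rewrite expnSK !rec_solution_exp.
Qed.

End PowerRecurrence.

Theorem corollary9 (R : realType) (a b : nat) (c : R) (h : nat -> \bar R) :
  (1 < a)%N -> (1 < b)%N -> (0 < c)%R ->
  (forall n : nat, (0 < n)%N -> 0 < h n /\ h n < +oo) ->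
  exists fT : nat -> \bar R,
    solves_rec a b c h fT /\
    (forall f : nat -> \bar R, solves_rec a b c h f ->
       forall n : nat, (0 < n)%N -> f n = fT n) /\
    (forall g : nat -> \bar R, inRTbc b c g ->
       improver (PhiT a b c h) g -> bigO fT g).
Proof.
move=> _ b_gt1 c_gt0 h_bounds.
have h_gt0 n : (0 < n)%N -> 0 < h n by case/h_bounds.
have fT_sol : solves_rec a b c h (rec_solution a b c h).
  exact: solves_rec_solution.
exists (rec_solution a b c h); split; [|split] => //.
- by move=> f f_sol; apply: solves_rec_unique f_sol fT_sol.
- move=> g g_RT g_imp; exists 1%N, 1%R; split=> //; split=> // n n_gt0.
  by rewrite mul1e; apply: solves_rec_le_improver fT_sol g_RT g_imp n n_gt0.
Qed.
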